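(* Let $0<\alpha<\pi$, let $z\in\mathbb D$, and let $\Omega_j=\omega(z,I_j,\mathbb D)$, $j=1,2,3,4$, where $I_1=(0,\alpha)$, $I_2=(\alpha,\pi)$, $I_3=(\pi,\pi+\alpha)$, $I_4=(\pi+\alpha,2\pi)$ (arcs of the unit circle given by argument ranges). Then \[ \frac{\sin(\pi\Omega_1)\sin(\pi\Omega_3)}{\sin(\pi\Omega_2)\sin(\pi\Omega_4)}=\tan^2\frac{\alpha}{2}. \] Equivalently, with $U=\Omega_1+\Omega_3$, $V=\Omega_1-\Omega_3$, $T=\Omega_4-\Omega_2$, \[ \frac{\sin\frac\pi2(U+V)\,\sin\frac\pi2(U-V)}{\sin\frac\pi2(1-U-T)\,\sin\frac\pi2(1-U+T)}=\tan^2\frac\alpha2 . \]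
   Context: $\mathbb D$ is the open unit disk and $\omega(z,I,\mathbb D)$ denotes the harmonic measure at $z$ of the boundary arc $I\subset\partial\mathbb D$ with respect to $\mathbb D$ (the Poisson integral of the indicator function of $I$). *)

From Stdlib Require Import Reals.
From Coquelicot Require Import Coquelicot.
Open Scope R_scope.

(* Poisson kernel of the unit disk at z = x + i y, evaluated at e^{it}:
   (1 - |z|^2) / |e^{it} - z|^2. *)
Definition poisson_kernel (x y t : R) : R :=
  (1 - (x ^ 2 + y ^ 2)) / ((cos t - x) ^ 2 + (sin t - y) ^ 2).

(* Harmonic measure omega(z, I, D) of the arc I = {e^{it} : a < t < b}
   (with a <= b, b - a <= 2 pi) at z = x + i y in the unit disk:
   the Poisson integral of the indicator of I,
   (1/(2 pi)) * int_a^b P(z, e^{it}) dt. *)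
Definition harm_meas_arc (x y a b : R) : R :=
  / (2 * PI) * RInt (poisson_kernel x y) a b.

(* With the primitive t - 2 arg(1 - conj z e^{it}) of the Poisson kernel, pi times the
   harmonic measure of the arc (a, b) is (b - a)/2 plus a difference of arguments, and one
   finds sin(pi omega(z, (a,b))) = sin((b-a)/2) (1 - |z|^2) / (|e^{ia} - z| |e^{ib} - z|).
   In the ratio of the theorem every distance |e^{it} - z| (t = 0, alpha, pi, pi + alpha,
   2 pi = 0) cancels, leaving (sin(alpha/2) / sin(pi/2 - alpha/2))^2.  The second form
   follows since the four harmonic measures sum to 1. *)
From Stdlib Require Import Reals Lra.
From Coquelicot Require Import Coquelicot.
Open Scope R_scope.

(* Real part and negated imaginary part of 1 - conj z e^{it}, for z = x + i y. *)
Definition pk_re (x y t : R) : R := 1 - x * cos t - y * sin t.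
Definition pk_im (x y t : R) : R := x * sin t - y * cos t.

Definition circle_dist (x y t : R) : R := sqrt ((cos t - x) ^ 2 + (sin t - y) ^ 2).

Definition poisson_primitive (x y t : R) : R := t + 2 * atan (pk_im x y t / pk_re x y t).

Lemma pk_re_im_norm x y t :
  pk_re x y t ^ 2 + pk_im x y t ^ 2 = (cos t - x) ^ 2 + (sin t - y) ^ 2.
Proof.
  unfold pk_re, pk_im. pose proof (sin2_cos2 t) as Hpyth. unfold Rsqr in Hpyth.
  transitivity ((cos t - x) ^ 2 + (sin t - y) ^ 2
                + (x ^ 2 + y ^ 2 - 1) * ((sin t * sin t + cos t * cos t) - 1)).
  - ring.
  - rewrite Hpyth. ring.
Qed.

Lemma pk_re_gt0 x y t : x ^ 2 + y ^ 2 < 1 -> 0 < pk_re x y t.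
Proof.
  intros Hz. pose proof (sin2_cos2 t) as Hpyth. unfold Rsqr in Hpyth.
  assert (Hrot : (x * cos t + y * sin t) ^ 2 + (x * sin t - y * cos t) ^ 2 = x ^ 2 + y ^ 2).
  { transitivity ((x ^ 2 + y ^ 2) * (sin t * sin t + cos t * cos t)); [ring | rewrite Hpyth; ring]. }
  pose proof (pow2_ge_0 (x * sin t - y * cos t)).
  unfold pk_re. nra.
Qed.

Lemma circle_dist_sq_gt0 x y t : x ^ 2 + y ^ 2 < 1 -> 0 < (cos t - x) ^ 2 + (sin t - y) ^ 2.
Proof.
  intros Hz. rewrite <- pk_re_im_norm. pose proof (pk_re_gt0 x y t Hz). nra.
Qed.

Lemma circle_dist_gt0 x y t : x ^ 2 + y ^ 2 < 1 -> 0 < circle_dist x y t.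
Proof. intros Hz. apply sqrt_lt_R0, circle_dist_sq_gt0, Hz. Qed.

Lemma circle_dist_2PI x y : circle_dist x y (2 * PI) = circle_dist x y 0.
Proof. unfold circle_dist. rewrite cos_2PI, sin_2PI, cos_0, sin_0. reflexivity. Qed.

Lemma poisson_kernel_continuous x y t :
  x ^ 2 + y ^ 2 < 1 -> continuous (poisson_kernel x y) t.
Proof.
  intros Hz. apply (@ex_derive_continuous R_AbsRing R_NormedModule).
  pose proof (circle_dist_sq_gt0 x y t Hz). unfold poisson_kernel. auto_derive. lra.
Qed.

Lemma is_derive_poisson_primitive x y t :
  x ^ 2 + y ^ 2 < 1 -> is_derive (poisson_primitive x y) t (poisson_kernel x y t).
Proof.
  intros Hz. pose proof (pk_re_gt0 x y t Hz) as Hre.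
  pose proof (circle_dist_sq_gt0 x y t Hz) as Hd. pose proof (pk_re_im_norm x y t) as Hnorm.
  pose proof (sin2_cos2 t) as Hpyth. unfold Rsqr in Hpyth.
  unfold poisson_primitive, poisson_kernel. unfold pk_re, pk_im in *.
  auto_derive; [lra|].
  rewrite <- Hnorm.
  replace (1 - (x ^ 2 + y ^ 2)) with
    (2 * (1 - x * cos t - y * sin t) - (1 - x * cos t - y * sin t) ^ 2
     - (x * sin t - y * cos t) ^ 2)
    by (transitivity (1 - (x ^ 2 + y ^ 2) * (sin t * sin t + cos t * cos t));
        [ring | rewrite Hpyth; ring]).
  field. split; lra.
Qed.

Lemma PI_harm_meas_arc x y a b : x ^ 2 + y ^ 2 < 1 ->
  PI * harm_meas_arc x y a b
  = (b - a) / 2 + atan (pk_im x y b / pk_re x y b) - atan (pk_im x y a / pk_re x y a).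
Proof.
  intros Hz. unfold harm_meas_arc.
  assert (Hint : is_RInt (poisson_kernel x y) a b
                   (minus (poisson_primitive x y b) (poisson_primitive x y a))).
  { apply (@is_RInt_derive R_CompleteNormedModule); intros t _.
    - apply is_derive_poisson_primitive, Hz.
    - apply poisson_kernel_continuous, Hz. }
  rewrite (is_RInt_unique _ _ _ _ Hint). unfold minus, plus, opp, poisson_primitive; simpl.
  pose proof PI_RGT_0. field. lra.
Qed.

Lemma harm_meas_arc_chasles x y a b c : x ^ 2 + y ^ 2 < 1 ->
  harm_meas_arc x y a b + harm_meas_arc x y b c = harm_meas_arc x y a c.
Proof.
  intros Hz. pose proof PI_RGT_0. apply (Rmult_eq_reg_l PI); [|lra].
  rewrite Rmult_plus_distr_l, !PI_harm_meas_arc by exact Hz. field.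
Qed.

Lemma harm_meas_arc_circle x y : x ^ 2 + y ^ 2 < 1 -> harm_meas_arc x y 0 (2 * PI) = 1.
Proof.
  intros Hz. pose proof PI_RGT_0. apply (Rmult_eq_reg_l PI); [|lra].
  rewrite PI_harm_meas_arc by exact Hz.
  unfold pk_re, pk_im. rewrite cos_2PI, sin_2PI, cos_0, sin_0. field.
Qed.

Lemma sqrt_norm_factor r i :
  0 < r -> sqrt (r ^ 2 + i ^ 2) = r * sqrt (1 + (i / r)²).
Proof.
  intros Hr.
  replace (r ^ 2 + i ^ 2) with ((r * r) * (1 + (i / r)²)) by (unfold Rsqr; field; lra).
  pose proof (Rle_0_sqr (i / r)).
  rewrite sqrt_mult, sqrt_square by nra. reflexivity.
Qed.

Lemma cos_atan_div r i : 0 < r -> cos (atan (i / r)) = r / sqrt (r ^ 2 + i ^ 2).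
Proof.
  intros Hr. rewrite cos_atan, sqrt_norm_factor by exact Hr.
  assert (0 < sqrt (1 + (i / r)²)) by (apply sqrt_lt_R0; pose proof (Rle_0_sqr (i / r)); lra).
  field. lra.
Qed.

Lemma sin_atan_div r i : 0 < r -> sin (atan (i / r)) = i / sqrt (r ^ 2 + i ^ 2).
Proof.
  intros Hr. rewrite sin_atan, sqrt_norm_factor by exact Hr.
  assert (0 < sqrt (1 + (i / r)²)) by (apply sqrt_lt_R0; pose proof (Rle_0_sqr (i / r)); lra).
  field. lra.
Qed.

Lemma pk_cross_identity x y a b :
  sin ((b - a) / 2) * (pk_re x y a * pk_re x y b + pk_im x y a * pk_im x y b)
  + cos ((b - a) / 2) * (pk_im x y b * pk_re x y a - pk_im x y a * pk_re x y b)
  = sin ((b - a) / 2) * (1 - (x ^ 2 + y ^ 2)).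
Proof.
  set (m := (a + b) / 2). set (h := (b - a) / 2).
  assert (Ea : a = m - h) by (unfold m, h; field).
  assert (Eb : b = m + h) by (unfold m, h; field).
  pose proof (sin2_cos2 m) as Hm. pose proof (sin2_cos2 h) as Hh. unfold Rsqr in Hm, Hh.
  unfold pk_re, pk_im. rewrite Ea, Eb, cos_minus, sin_minus, cos_plus, sin_plus.
  transitivity (sin h * (1 - (x ^ 2 + y ^ 2) * (sin h * sin h + cos h * cos h))
     - sin h * (x ^ 2 + y ^ 2) * (sin h * sin h + cos h * cos h)
       * (sin m * sin m + cos m * cos m - 1)).
  - ring.
  - rewrite Hm, Hh. ring.
Qed.

Lemma sin_PI_harm_meas_arc x y a b : x ^ 2 + y ^ 2 < 1 ->
  sin (PI * harm_meas_arc x y a b)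
  = sin ((b - a) / 2) * (1 - (x ^ 2 + y ^ 2)) / (circle_dist x y a * circle_dist x y b).
Proof.
  intros Hz. rewrite PI_harm_meas_arc by exact Hz.
  pose proof (pk_re_gt0 x y a Hz) as Ha. pose proof (pk_re_gt0 x y b Hz) as Hb.
  pose proof (circle_dist_gt0 x y a Hz) as Hda. pose proof (circle_dist_gt0 x y b Hz) as Hdb.
  set (tb := atan (pk_im x y b / pk_re x y b)). set (ta := atan (pk_im x y a / pk_re x y a)).
  replace ((b - a) / 2 + tb - ta) with ((b - a) / 2 + (tb - ta)) by ring.
  rewrite sin_plus, sin_minus, cos_minus. unfold ta, tb.
  rewrite !cos_atan_div, !sin_atan_div by assumption.
  unfold circle_dist in *. rewrite !pk_re_im_norm, <- pk_cross_identity.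
  field. split; lra.
Qed.

Theorem lemma3p1 (alpha x y : R)
  (Halpha : 0 < alpha < PI) (Hz : x ^ 2 + y ^ 2 < 1) :
  let O1 := harm_meas_arc x y 0 alpha in
  let O2 := harm_meas_arc x y alpha PI in
  let O3 := harm_meas_arc x y PI (PI + alpha) in
  let O4 := harm_meas_arc x y (PI + alpha) (2 * PI) in
  let U := O1 + O3 in
  let V := O1 - O3 in
  let T := O4 - O2 in
  sin (PI * O1) * sin (PI * O3) / (sin (PI * O2) * sin (PI * O4))
    = (tan (alpha / 2)) ^ 2
  /\
  sin (PI / 2 * (U + V)) * sin (PI / 2 * (U - V))
    / (sin (PI / 2 * (1 - U - T)) * sin (PI / 2 * (1 - U + T)))
    = (tan (alpha / 2)) ^ 2.
Proof.
  intros O1 O2 O3 O4 U V T.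
  assert (Hsum : O1 + O2 + O3 + O4 = 1).
  { unfold O1, O2, O3, O4. rewrite !harm_meas_arc_chasles by exact Hz.
    apply harm_meas_arc_circle, Hz. }
  assert (Hratio : sin (PI * O1) * sin (PI * O3) / (sin (PI * O2) * sin (PI * O4))
                   = (tan (alpha / 2)) ^ 2).
  { unfold O1, O2, O3, O4. rewrite !sin_PI_harm_meas_arc, circle_dist_2PI by exact Hz.
    replace ((alpha - 0) / 2) with (alpha / 2) by field.
    replace ((PI + alpha - PI) / 2) with (alpha / 2) by field.
    replace ((PI - alpha) / 2) with (PI / 2 - alpha / 2) by field.
    replace ((2 * PI - (PI + alpha)) / 2) with (PI / 2 - alpha / 2) by field.
    rewrite sin_shift. unfold tan.
    assert (0 < cos (alpha / 2)) by (apply cos_gt_0; lra).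
    pose proof (circle_dist_gt0 x y 0 Hz). pose proof (circle_dist_gt0 x y alpha Hz).
    pose proof (circle_dist_gt0 x y PI Hz). pose proof (circle_dist_gt0 x y (PI + alpha) Hz).
    field. repeat split; lra. }
  split; [exact Hratio|].
  unfold U, V, T. rewrite <- Hratio. clearbody O1 O2 O3 O4.
  replace (PI / 2 * (O1 + O3 + (O1 - O3))) with (PI * O1) by field.
  replace (PI / 2 * (O1 + O3 - (O1 - O3))) with (PI * O3) by field.
  replace (PI / 2 * (1 - (O1 + O3) - (O4 - O2))) with (PI * O2) by (rewrite <- Hsum; field).
  replace (PI / 2 * (1 - (O1 + O3) + (O4 - O2))) with (PI * O4) by (rewrite <- Hsum; field).
  reflexivity.
Qed.
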